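(* Let $\mathcal{C}$ be a category. Let $\rho$ be a PBPO$^{+}$ rewrite rule consisting of morphisms $l : K \to L$, $r : K \to R$, monomorphisms $t_L : L \rightarrowtail L'$ and $t_K : K \rightarrowtail K'$, and $l' : K' \to L'$, such that $L \xleftarrow{l} K \xrightarrow{t_K} K'$ is a pullback of $L \xrightarrow{t_L} L' \xleftarrow{l'} K'$. Let $G_L$ be an object, $\alpha : G_L \to L'$ and $m : L \to G_L$ morphisms such that $L \xleftarrow{1_L} L \xrightarrow{m} G_L$ is a pullback of $L \xrightarrow{t_L} L' \xleftarrow{\alpha} G_L$, and let $G_L \xleftarrow{g_L} G_K \xrightarrow{u'} K'$ be a pullback of $G_L \xrightarrow{\alpha} L' \xleftarrow{l'} K'$. Then there exists a morphism $u : K \to G_K$ such that $L \xleftarrow{l} K \xrightarrow{u} G_K$ is a pullback of $L \xrightarrow{m} G_L \xleftarrow{g_L} G_K$, $t_K = u' \circ u$, and $u$ is a monomorphism.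
   Context: A PBPO$^{+}$ rewrite rule in a category is a diagram $L \xleftarrow{l} K \xrightarrow{r} R$ together with monomorphisms $t_L : L \rightarrowtail L'$, $t_K : K \rightarrowtail K'$ and a morphism $l' : K' \to L'$ such that the square $t_L \circ l = l' \circ t_K$ is a pullback square. The pair $(m,\alpha)$ with $L \xleftarrow{1_L} L \xrightarrow{m} G_L$ a pullback of $t_L$ and $\alpha$ is called a strong match. *)

Record Category := {
  Ob :> Type;
  Hom : Ob -> Ob -> Type;
  idm : forall A, Hom A A;
  comp : forall A B C, Hom B C -> Hom A B -> Hom A C;
  comp_assoc : forall A B C D (h : Hom C D) (g : Hom B C) (f : Hom A B),
      comp _ _ _ h (comp _ _ _ g f) = comp _ _ _ (comp _ _ _ h g) f;
  comp_id_l : forall A B (f : Hom A B), comp _ _ _ (idm B) f = f;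
  comp_id_r : forall A B (f : Hom A B), comp _ _ _ f (idm A) = f
}.

Arguments Hom {c} _ _.
Arguments idm {c} A.
Arguments comp {c A B C} _ _.

Notation "g ∘ f" := (comp g f) (at level 40, left associativity).

Definition mono {C : Category} {A B : C} (f : Hom A B) : Prop :=
  forall X (g h : Hom X A), f ∘ g = f ∘ h -> g = h.

(* [is_pullback f g p1 p2]:  A <-p1- P -p2-> B  is a pullback of
   the cospan  A -f-> Z <-g- B. *)
Definition is_pullback {C : Category} {A B Z P : C}
  (f : Hom A Z) (g : Hom B Z) (p1 : Hom P A) (p2 : Hom P B) : Prop :=
  f ∘ p1 = g ∘ p2 /\
  forall (X : C) (q1 : Hom X A) (q2 : Hom X B),
    f ∘ q1 = g ∘ q2 ->
    exists h : Hom X P,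
      (p1 ∘ h = q1 /\ p2 ∘ h = q2) /\
      forall h' : Hom X P, p1 ∘ h' = q1 -> p2 ∘ h' = q2 -> h' = h.

(* The candidate [u] is the mediating map of the pullback [G_K] for the
   cone [(m ∘ l, t_K)], which commutes because [alpha ∘ m = t_L].  Pasting
   the square [m ∘ l = g_L ∘ u] to the pullback square of [G_K] gives the
   rectangle [t_L ∘ l = l' ∘ t_K], a pullback by hypothesis, so the
   pullback lemma makes the left square a pullback; [u] is monic because
   [u' ∘ u = t_K] is. *)


Section Pullbacks.

Variable C : Category.

Lemma mono_of_mono_comp {A B D : C} (f : Hom A B) (g : Hom B D) :
  mono (g ∘ f) -> mono f.
Proof.
  intros Hgf X h h' E.
  apply Hgf.
  rewrite <- !comp_assoc, E.
  reflexivity.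
Qed.

Lemma pullback_hom_ext {A B Z P X : C}
  (f : Hom A Z) (g : Hom B Z) (p1 : Hom P A) (p2 : Hom P B) (h h' : Hom X P) :
  is_pullback f g p1 p2 -> p1 ∘ h = p1 ∘ h' -> p2 ∘ h = p2 ∘ h' -> h = h'.
Proof.
  intros [Hsq Huniv] E1 E2.
  assert (Hcone : f ∘ (p1 ∘ h) = g ∘ (p2 ∘ h)).
  { rewrite !comp_assoc, Hsq. reflexivity. }
  destruct (Huniv _ _ _ Hcone) as [k [_ Hk]].
  rewrite (Hk h eq_refl eq_refl).
  symmetry. apply Hk; symmetry; assumption.
Qed.

(*   P --p2--> Q --q2--> D
     |p1       |q1       |d
     A --a---> B --b---> Z   *)
Lemma pullback_pasting_left {A B D Z P Q : C}
  (a : Hom A B) (b : Hom B Z) (d : Hom D Z)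
  (p1 : Hom P A) (p2 : Hom P Q) (q1 : Hom Q B) (q2 : Hom Q D) :
  is_pullback b d q1 q2 ->
  is_pullback (b ∘ a) d p1 (q2 ∘ p2) ->
  a ∘ p1 = q1 ∘ p2 ->
  is_pullback a q1 p1 p2.
Proof.
  intros Hright [_ Houter] Hsq.
  split; [exact Hsq|].
  intros X x y Hxy.
  assert (Hcone : (b ∘ a) ∘ x = d ∘ (q2 ∘ y)).
  { rewrite <- comp_assoc, Hxy, !comp_assoc, (proj1 Hright). reflexivity. }
  destruct (Houter _ _ _ Hcone) as [h [[Hh1 Hh2] Huniq]].
  assert (Hp2h : p2 ∘ h = y).
  { apply (pullback_hom_ext _ _ _ _ _ _ Hright).
    - rewrite comp_assoc, <- Hsq, <- comp_assoc, Hh1. exact Hxy.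
    - rewrite comp_assoc. exact Hh2. }
  exists h. split; [split; assumption|].
  intros h' E1 E2.
  apply Huniq; [exact E1|].
  rewrite <- comp_assoc, E2. reflexivity.
Qed.

End Pullbacks.

Theorem lemma1 (C : Category) (L K R L' K' GL GK : C)
  (l : Hom K L) (r : Hom K R) (tL : Hom L L') (tK : Hom K K') (l' : Hom K' L')
  (alpha : Hom GL L') (m : Hom L GL) (gL : Hom GK GL) (u' : Hom GK K') :
  mono tL -> mono tK ->
  is_pullback tL l' l tK ->
  is_pullback tL alpha (idm L) m ->
  is_pullback alpha l' gL u' ->
  exists u : Hom K GK,
    is_pullback m gL l u /\ tK = u' ∘ u /\ mono u.
Proof.
  intros _ HtK Hrule [Hmatch _] HGK.
  rewrite comp_id_r in Hmatch.
  assert (Hcone : alpha ∘ (m ∘ l) = l' ∘ tK).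
  { rewrite comp_assoc, <- Hmatch. exact (proj1 Hrule). }
  destruct (proj2 HGK _ _ _ Hcone) as [u [[Hu1 Hu2] _]].
  exists u.
  split; [|split].
  - apply (pullback_pasting_left _ m alpha l' l u gL u' HGK).
    + rewrite <- Hmatch, Hu2. exact Hrule.
    + exact (eq_sym Hu1).
  - exact (eq_sym Hu2).
  - apply (mono_of_mono_comp _ u u'). rewrite Hu2. exact HtK.
Qed.
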